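(* Let $C_e:=\min\{\tfrac12(\rho/\bar v)^2,\ \tfrac{\sqrt2}{4}(\rho/\bar v)\}$. Under partial information feedback, for any $t\ge2$, the OGD-CB algorithm guarantees $|\mathcal I_t|\ge C_e\,(t-1)$.
   Context: Model: constants $\bar v>0$, $\rho\in(0,\bar v]$; $T$ rounds; budget $B=\rho T$. Round $t$: value $v_t\in[0,\bar v]$, highest competing bid $p_t\in[0,\bar v]$; buyer picks $x_t\in\{0,1\}$, pays $x_tc_t$ with $c_t=p_t\mathbf 1[v_t\ge p_t]$. Partial information feedback: $p_t$ is observed at the end of round $t$ only if $x_t=1$. OGD-CB algorithm: $\mathcal I_1=\emptyset$, $B_1=B$, $\lambda_1=0$. For $t=1,\dots,T$: observe $v_t$. If $t=1$: $x_1=1$, $\lambda_2=\lambda_1$. Otherwise: $\epsilon_t=\sqrt{(\ln 2+2\ln T)/(2|\mathcal I_t|)}$; $\tilde r_t(v)=\frac1{|\mathcal I_t|}\sum_{\tau\in\mathcal I_t}(v-p_\tau)^++\epsilon_tv$; $\tilde c_t(v)=\frac1{|\mathcal I_t|}\sum_{\tau\in\mathcal I_t}p_\tau\mathbf 1[v\ge p_\tau]-2\epsilon_tv$; $x_t=\mathbf 1[\tilde r_t(v_t)\ge\lambda_t\tilde c_t(v_t)]$; $\eta_t=1/(\bar v\sqrt t)$; $\lambda_{t+1}=(\lambda_t+\eta_t(x_t\tilde c_t(v_t)-\rho))^+$. If $x_t=1$, observe $p_t$ and set $\mathcal I_{t+1}=\mathcal I_t\cup\{t\}$, else $\mathcal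 I_{t+1}=\mathcal I_t$. Set $B_{t+1}=B_t-x_tc_t$; if $B_{t+1}<\bar v$, stop. *)

From Stdlib Require Import Reals Lra List.
Import ListNotations.
Open Scope R_scope.

(* State of OGD-CB before a round: observed index set I_t (list of past
   rounds where the buyer bid), dual variable lambda_t, remaining budget B_t. *)
Record ogd_state := mkSt { sI : list nat; sLam : R; sB : R }.

Section OGD.
Variables (vbar rho : R) (T : nat) (v p : nat -> R).

Definition cost (t : nat) : R := if Rle_dec (p t) (v t) then p t else 0.

Definition sumI (I : list nat) (f : nat -> R) : R :=
  fold_right (fun tau acc => f tau + acc) 0 I.

Definition eps_t (I : list nat) : R :=
  sqrt ((ln 2 + 2 * ln (INR T)) / (2 * INR (length I))).

Definition r_tilde (I : list nat) (x : R) : R :=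
  sumI I (fun tau => Rmax (x - p tau) 0) / INR (length I) + eps_t I * x.

Definition c_tilde (I : list nat) (x : R) : R :=
  sumI I (fun tau => if Rle_dec (p tau) x then p tau else 0) / INR (length I)
  - 2 * eps_t I * x.

Definition decide (t : nat) (s : ogd_state) : bool :=
  if Nat.eqb t 1 then true
  else if Rle_dec (sLam s * c_tilde (sI s) (v t)) (r_tilde (sI s) (v t))
       then true else false.

Definition eta (t : nat) : R := 1 / (vbar * sqrt (INR t)).

Definition step (t : nat) (s : ogd_state) : ogd_state :=
  let x := decide t s in
  let xr := if x then 1 else 0 in
  let lam' := if Nat.eqb t 1 then sLam s
              else Rmax (sLam s + eta t * (xr * c_tilde (sI s) (v t) - rho)) 0 in
  let I' := if x then t :: sI s else sI s in
  mkSt I' lam' (sB s - xr * cost t).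

(* ogd_pre n = state before round n+1; initial state I_1 = {}, lambda_1 = 0,
   B_1 = rho T *)
Fixpoint ogd_pre (n : nat) : ogd_state :=
  match n with
  | O => mkSt [] 0 (rho * INR T)
  | S m => step (S m) (ogd_pre m)
  end.

Definition ogd_state_at (t : nat) : ogd_state := ogd_pre (t - 1).

End OGD.

Definition C_e (vbar rho : R) : R :=
  Rmin (/2 * (rho / vbar) ^ 2) (sqrt 2 / 4 * (rho / vbar)).

(* The potential lambda_t - 2 sqrt |I_t| drops by at least
   2 (rho/vbar) (sqrt (t+1) - sqrt t) in every round t >= 2.  In a bidding
   round sqrt |I| grows by at least 1 / (2 sqrt t), while the dual step raises
   lambda by at most (1 - rho/vbar) / sqrt t because c~_t(v) <= v <= vbar.
   In a skipping round, lambda_t c~_t(v_t) > r~_t(v_t) >= eps_t v_t together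
   with c~_t(v_t) <= v_t forces lambda_t > eps_t >= 1 / sqrt t, so the
   projection onto lambda >= 0 is inactive and lambda drops by exactly
   (rho/vbar) / sqrt t.  After round 1 we have lambda = 0 and |I| = 1, so
   lambda >= 0 yields sqrt |I_t| >= 1 + (rho/vbar) (sqrt t - sqrt 2), whose
   square is at least (rho/vbar)^2 (t - 1) / 2 >= C_e (t - 1). *)

From Stdlib Require Import Reals List Lra Lia Psatz.
Open Scope R_scope.

Lemma sumI_ge0 (I : list nat) (f : nat -> R) :
  (forall tau, 0 <= f tau) -> 0 <= sumI I f.
Proof.
  intros Hf; induction I as [|tau I IH]; simpl; [lra|].
  specialize (Hf tau); lra.
Qed.

Lemma sumI_le (I : list nat) (f : nat -> R) (c : R) :
  (forall tau, f tau <= c) -> sumI I f <= INR (length I) * c.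
Proof.
  intros Hf; induction I as [|tau I IH]; simpl sumI; simpl length; [simpl; lra|].
  rewrite S_INR; specialize (Hf tau); lra.
Qed.

Lemma one_le_ln (x : R) : exp 1 <= x -> 1 <= ln x.
Proof.
  intros Hx; destruct (Rlt_le_dec (ln x) 1) as [Hlt|]; [exfalso|assumption].
  pose proof (exp_pos 1).
  rewrite <- (ln_exp 1) in Hlt.
  apply ln_lt_inv in Hlt; lra.
Qed.

Lemma sqrt_succ_sub (x : R) :
  0 <= x -> sqrt (x + 1) - sqrt x = / (sqrt (x + 1) + sqrt x).
Proof.
  intros Hx.
  pose proof (sqrt_sqrt (x + 1) ltac:(lra)).
  pose proof (sqrt_sqrt x Hx).
  pose proof (sqrt_pos x).
  assert (0 < sqrt (x + 1)) by (apply sqrt_lt_R0; lra).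
  apply (Rmult_eq_reg_r (sqrt (x + 1) + sqrt x)); [|lra].
  rewrite Rinv_l by lra; nra.
Qed.

Lemma inv_sqrt_le_twice_sqrt_succ_sub (x y : R) :
  0 <= x -> x + 1 <= y -> / sqrt y <= 2 * (sqrt (x + 1) - sqrt x).
Proof.
  intros Hx Hxy; rewrite sqrt_succ_sub by exact Hx.
  pose proof (sqrt_pos x).
  assert (0 < sqrt (x + 1)) by (apply sqrt_lt_R0; lra).
  assert (sqrt x <= sqrt (x + 1)) by (apply sqrt_le_1_alt; lra).
  assert (sqrt (x + 1) <= sqrt y) by (apply sqrt_le_1_alt; lra).
  replace (/ sqrt y) with (2 * / (2 * sqrt y)) by (field; apply Rgt_not_eq; lra).
  apply Rmult_le_compat_l; [lra|].
  apply Rinv_le_contravar; lra.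
Qed.

Lemma twice_sqrt_succ_sub_le_inv_sqrt (x : R) :
  0 < x -> 2 * (sqrt (x + 1) - sqrt x) <= / sqrt x.
Proof.
  intros Hx; rewrite sqrt_succ_sub by lra.
  assert (0 < sqrt x) by (apply sqrt_lt_R0; lra).
  assert (sqrt x <= sqrt (x + 1)) by (apply sqrt_le_1_alt; lra).
  replace (/ sqrt x) with (2 * / (2 * sqrt x)) by (field; apply Rgt_not_eq; lra).
  apply Rmult_le_compat_l; [lra|].
  apply Rinv_le_contravar; lra.
Qed.

Lemma half_sq_mul_le_sq (a s x : R) :
  0 <= a <= 1 -> 1 <= s -> 1 + a * (sqrt (s + 1) - sqrt 2) <= x ->
  / 2 * a ^ 2 * s <= x ^ 2.
Proof.
  intros Ha Hs Hx.
  set (U := sqrt (s + 1)) in *; set (r := sqrt 2) in *.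
  set (w := 1 + a * (U - r)) in *.
  assert (HU : U * U = s + 1) by (apply sqrt_sqrt; lra).
  assert (Hr : r * r = 2) by (apply sqrt_sqrt; lra).
  assert (Hr1 : 1 <= r) by (rewrite <- sqrt_1; apply sqrt_le_1_alt; lra).
  assert (HrU : r <= U) by (apply sqrt_le_1_alt; lra).
  assert (Hw : 1 <= w) by (unfold w; nra).
  assert (HaU : a * U <= r * w).
  { (* (r - 1) w + 1 - r a >= r (1 - a) >= 0 because w >= 1 *)
    assert (r * w - a * U = (r - 1) * w + 1 - r * a) by (unfold w; ring). nra. }
  assert (HaU2 : (a * U) ^ 2 <= (r * w) ^ 2).
  { apply pow_incr; split; [apply Rmult_le_pos; lra|exact HaU]. }
  replace ((a * U) ^ 2) with (a ^ 2 * (s + 1)) in HaU2 by (rewrite <- HU; ring).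
  replace ((r * w) ^ 2) with (2 * w ^ 2) in HaU2 by (rewrite <- Hr; ring).
  assert (w ^ 2 <= x ^ 2) by (apply pow_incr; lra).
  assert (0 <= a ^ 2) by (apply pow2_ge_0).
  lra.
Qed.

Section OgdCb.

Variables (vbar rho : R) (T : nat) (v p : nat -> R).
Hypotheses (vbar_gt0 : 0 < vbar) (rho_gt0 : 0 < rho) (rho_le_vbar : rho <= vbar).
Hypothesis v_bounded : forall t, (1 <= t <= T)%nat -> 0 <= v t <= vbar.

Local Notation state k := (ogd_pre vbar rho T v p k).
Local Notation round n s := (step vbar rho T v p n s).

Lemma rho_div_vbar_bounds : 0 <= rho / vbar <= 1.
Proof.
  split.
  - apply Rlt_le, Rdiv_pos_pos; lra.
  - apply (Rmult_le_reg_r vbar); [lra|].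
    unfold Rdiv; rewrite Rmult_assoc, Rinv_l; lra.
Qed.

Lemma eps_t_ge0 (I : list nat) : 0 <= eps_t T I.
Proof. apply sqrt_pos. Qed.

Lemma c_tilde_le (I : list nat) (x : R) :
  (1 <= length I)%nat -> 0 <= x -> c_tilde T p I x <= x.
Proof.
  intros HI Hx; unfold c_tilde.
  assert (HL : 1 <= INR (length I)) by (apply (le_INR 1); exact HI).
  assert (Havg : sumI I (fun tau => if Rle_dec (p tau) x then p tau else 0)
                 / INR (length I) <= x).
  { apply (Rmult_le_reg_r (INR (length I))); [lra|].
    unfold Rdiv; rewrite Rmult_assoc, Rinv_l by lra; rewrite Rmult_1_r, Rmult_comm.
    apply sumI_le; intros tau; destruct (Rle_dec (p tau) x); lra. }
  assert (0 <= 2 * eps_t T I * x) by (pose proof (eps_t_ge0 I); nra).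
  lra.
Qed.

Lemma eps_mul_le_r_tilde (I : list nat) (x : R) :
  (1 <= length I)%nat -> eps_t T I * x <= r_tilde T p I x.
Proof.
  intros HI; unfold r_tilde.
  assert (HL : 0 < INR (length I)) by (apply lt_0_INR; exact HI).
  assert (0 <= sumI I (fun tau => Rmax (x - p tau) 0) / INR (length I)).
  { apply Rmult_le_pos; [apply sumI_ge0; intros; apply Rmax_r|].
    apply Rlt_le, Rinv_0_lt_compat; exact HL. }
  lra.
Qed.

Lemma inv_sqrt_le_eps_t (I : list nat) (n : nat) :
  (3 <= T)%nat -> (1 <= length I <= n)%nat -> / sqrt (INR n) <= eps_t T I.
Proof.
  intros HT HI; unfold eps_t.
  assert (Hm : 1 <= INR (length I)) by (apply (le_INR 1); lia).
  assert (Hmn : INR (length I) <= INR n) by (apply le_INR; lia).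
  assert (Hlog : 2 <= ln 2 + 2 * ln (INR T)).
  { assert (0 < ln 2) by (pose proof ln_lt_2; lra).
    assert (1 <= ln (INR T)).
    { apply one_le_ln; pose proof exp_le_3; apply (le_INR 3) in HT; simpl in HT; lra. }
    lra. }
  rewrite <- sqrt_inv; apply sqrt_le_1_alt.
  apply Rle_trans with (/ INR (length I)); [apply Rinv_le_contravar; lra|].
  unfold Rdiv; rewrite Rinv_mult.
  assert (0 < / INR (length I)) by (apply Rinv_0_lt_compat; lra).
  nra.
Qed.

Lemma length_sI_le (k : nat) : (length (sI (state k)) <= k)%nat.
Proof.
  induction k as [|k IH]; [simpl; lia|].
  change (state (S k)) with (round (S k) (state k)); unfold step.
  destruct (decide T v p (S k) (state k)); simpl; lia.
Qed.

Lemma length_sI_ge1 (k : nat) : (1 <= k)%nat -> (1 <= length (sI (state k)))%nat.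
Proof.
  induction k as [|k IH]; intros Hk; [lia|].
  change (state (S k)) with (round (S k) (state k)); unfold step.
  destruct k as [|k]; [reflexivity|].
  destruct (decide T v p (S (S k)) (state (S k))); simpl; [lia|apply IH; lia].
Qed.

Lemma sLam_ge0 (k : nat) : 0 <= sLam (state k).
Proof.
  induction k as [|k IH]; [simpl; lra|].
  change (state (S k)) with (round (S k) (state k)); unfold step; cbn [sLam].
  destruct (Nat.eqb (S k) 1); [exact IH|apply Rmax_r].
Qed.

Lemma skip_eps_t_lt_sLam (n : nat) (s : ogd_state) :
  n <> 1%nat -> decide T v p n s = false -> 0 <= v n ->
  (1 <= length (sI s))%nat -> 0 <= sLam s -> eps_t T (sI s) < sLam s.
Proof.
  intros Hn Hskip Hv HI Hlam.
  unfold decide in Hskip; rewrite (proj2 (Nat.eqb_neq n 1) Hn) in Hskip.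
  destruct (Rle_dec _ _) as [|Hbid]; [discriminate|].
  destruct (Rlt_le_dec (eps_t T (sI s)) (sLam s)) as [|Hle]; [assumption|].
  exfalso; apply Hbid.
  pose proof (c_tilde_le (sI s) (v n) HI Hv).
  pose proof (eps_mul_le_r_tilde (sI s) (v n) HI).
  apply Rle_trans with (sLam s * v n); [nra|].
  apply Rle_trans with (eps_t T (sI s) * v n); nra.
Qed.

Lemma sLam_round_bid (n : nat) (s : ogd_state) :
  (2 <= n <= T)%nat -> decide T v p n s = true ->
  (1 <= length (sI s))%nat -> 0 <= sLam s ->
  sLam (round n s) <= sLam s + (1 - rho / vbar) / sqrt (INR n).
Proof.
  intros Hn Hbid HI Hlam.
  pose proof rho_div_vbar_bounds.
  pose proof (v_bounded n ltac:(lia)).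
  pose proof (c_tilde_le (sI s) (v n) HI ltac:(lra)).
  assert (Hsqrt : 0 < sqrt (INR n)) by (apply sqrt_lt_R0, lt_0_INR; lia).
  assert (Heta : 0 <= eta vbar n).
  { apply Rlt_le; unfold eta, Rdiv; rewrite Rmult_1_l.
    apply Rinv_0_lt_compat, Rmult_lt_0_compat; assumption. }
  unfold step; rewrite Hbid, (proj2 (Nat.eqb_neq n 1) ltac:(lia)); cbn [sLam].
  apply Rmax_lub.
  - replace ((1 - rho / vbar) / sqrt (INR n)) with (eta vbar n * (vbar - rho))
      by (unfold eta; field; split; apply Rgt_not_eq; assumption).
    apply Rplus_le_compat_l, Rmult_le_compat_l; lra.
  - assert (0 <= (1 - rho / vbar) / sqrt (INR n)).
    { apply Rmult_le_pos; [lra|apply Rlt_le, Rinv_0_lt_compat, Hsqrt]. }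
    lra.
Qed.

Lemma sLam_round_skip (n : nat) (s : ogd_state) :
  (3 <= T)%nat -> (2 <= n <= T)%nat -> decide T v p n s = false ->
  (1 <= length (sI s) <= n)%nat -> 0 <= sLam s ->
  sLam (round n s) = sLam s - rho / vbar / sqrt (INR n).
Proof.
  intros HT Hn Hskip HI Hlam.
  pose proof rho_div_vbar_bounds.
  pose proof (v_bounded n ltac:(lia)).
  assert (Hsqrt : 0 < sqrt (INR n)) by (apply sqrt_lt_R0, lt_0_INR; lia).
  assert (Heps : rho / vbar / sqrt (INR n) < sLam s).
  { apply Rle_lt_trans with (/ sqrt (INR n)).
    - unfold Rdiv; rewrite <- (Rmult_1_l (/ sqrt (INR n))) at 2.
      apply Rmult_le_compat_r; [apply Rlt_le, Rinv_0_lt_compat, Hsqrt|lra].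
    - apply Rle_lt_trans with (eps_t T (sI s)); [apply inv_sqrt_le_eps_t; lia|].
      apply (skip_eps_t_lt_sLam n); [lia|assumption|lra|lia|assumption]. }
  unfold step; rewrite Hskip, (proj2 (Nat.eqb_neq n 1) ltac:(lia)); cbn [sLam].
  replace (eta vbar n * (0 * c_tilde T p (sI s) (v n) - rho))
    with (- (rho / vbar / sqrt (INR n)))
    by (unfold eta; field; split; apply Rgt_not_eq; assumption).
  apply Rmax_left; lra.
Qed.

Definition potential (s : ogd_state) : R :=
  sLam s - 2 * sqrt (INR (length (sI s))).

Lemma potential_round (n : nat) (s : ogd_state) :
  (3 <= T)%nat -> (2 <= n <= T)%nat ->
  (1 <= length (sI s) < n)%nat -> 0 <= sLam s ->
  potential (round n s) + 2 * (rho / vbar) * (sqrt (INR n + 1) - sqrt (INR n))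
    <= potential s.
Proof.
  intros HT Hn HI Hlam; unfold potential.
  pose proof rho_div_vbar_bounds.
  assert (Hn0 : 0 < INR n) by (apply lt_0_INR; lia).
  assert (Hdrift : rho / vbar * (2 * (sqrt (INR n + 1) - sqrt (INR n)))
                   <= rho / vbar * / sqrt (INR n)).
  { apply Rmult_le_compat_l; [lra|].
    apply twice_sqrt_succ_sub_le_inv_sqrt, Hn0. }
  destruct (decide T v p n s) eqn:Hx.
  - assert (HIn : sI (round n s) = n :: sI s) by (unfold step; rewrite Hx; reflexivity).
    rewrite HIn; cbn [length]; rewrite S_INR.
    assert (Hgain : / sqrt (INR n) <= 2 * (sqrt (INR (length (sI s)) + 1)
                                           - sqrt (INR (length (sI s))))).
    { apply inv_sqrt_le_twice_sqrt_succ_sub; [apply pos_INR|].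
      rewrite <- S_INR; apply le_INR; lia. }
    pose proof (sLam_round_bid n s ltac:(lia) Hx ltac:(lia) Hlam) as Hstep.
    unfold Rdiv in Hstep, Hdrift; lra.
  - assert (HIn : sI (round n s) = sI s) by (unfold step; rewrite Hx; reflexivity).
    rewrite HIn.
    pose proof (sLam_round_skip n s HT Hn Hx ltac:(lia) Hlam) as Hstep.
    unfold Rdiv in Hstep, Hdrift; lra.
Qed.

Lemma potential_state_le (k : nat) :
  (1 <= k)%nat -> (k < T)%nat ->
  potential (state k) <= -2 - 2 * (rho / vbar) * (sqrt (INR k + 1) - sqrt 2).
Proof.
  induction k as [|k IH]; intros Hk HkT; [lia|].
  destruct (Nat.eq_dec k 0) as [->|].
  - unfold potential; simpl; rewrite sqrt_1.
    replace (1 + 1) with 2 by ring; lra.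
  - specialize (IH ltac:(lia) ltac:(lia)).
    change (state (S k)) with (round (S k) (state k)).
    pose proof (length_sI_ge1 k ltac:(lia)).
    pose proof (length_sI_le k).
    pose proof (potential_round (S k) (state k) ltac:(lia) ltac:(lia) ltac:(lia)
                  (sLam_ge0 k)).
    rewrite S_INR in *; lra.
Qed.

End OgdCb.

Theorem lemma5 (vbar rho : R) (T : nat) (v p : nat -> R) :
  0 < vbar -> 0 < rho -> rho <= vbar ->
  (forall t, (1 <= t <= T)%nat -> 0 <= v t <= vbar) ->
  (forall t, (1 <= t <= T)%nat -> 0 <= p t <= vbar) ->
  forall t : nat, (2 <= t <= T)%nat ->
  (* the algorithm has not stopped before round t:
     B_{s+1} >= vbar for every round s = 1, ..., t-1 *)
  (forall s : nat, (1 <= s < t)%nat ->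
     vbar <= sB (ogd_state_at vbar rho T v p (s + 1))) ->
  C_e vbar rho * INR (t - 1)
    <= INR (length (sI (ogd_state_at vbar rho T v p t))).
Proof.
  intros Hvbar Hrho Hrv Hv _ t Ht _; unfold ogd_state_at.
  pose proof (potential_state_le vbar rho T v p Hvbar Hrho Hrv Hv (t - 1)
                ltac:(lia) ltac:(lia)) as Hpot.
  pose proof (sLam_ge0 vbar rho T v p (t - 1)) as Hlam.
  unfold potential in Hpot.
  apply Rle_trans with (/ 2 * (rho / vbar) ^ 2 * INR (t - 1)).
  - apply Rmult_le_compat_r; [apply pos_INR|apply Rmin_l].
  - rewrite <- (pow2_sqrt (INR (length _))) by apply pos_INR.
    apply half_sq_mul_le_sq.
    + exact (rho_div_vbar_bounds vbar rho Hvbar Hrho Hrv).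
    + apply (le_INR 1); lia.
    + lra.
Qed.
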